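(* Let $0 \leq r < 1$. Define $\delta_k \in \{0,1\}$ for $k \geq 1$ inductively by $\delta_k = 1$ if $\frac{\sum_{i=1}^{k-1} 2i\delta_i + 2k}{k(k+1)} \leq r$, and $\delta_k = 0$ otherwise. For $k \geq 1$ let $w^{\langle k \rangle}$ be the word consisting of $2k$ copies of the letter $1 - \delta_k$, and let $w = w^{\langle 1 \rangle} w^{\langle 2 \rangle} w^{\langle 3 \rangle} \cdots$ (infinite concatenation). Then $\lim_{n \to \infty} |Z(w^{(n)})|/n = r$.
   Context: $w^{(n)}$ denotes the initial subword of length $n$ of $w$, and $Z(u)$ is the set of indices $i$ with $u_i = 0$. *)

From mathcomp Require Import all_boot all_order all_algebra.
From mathcomp Require Import all_classical all_reals all_analysis.
Set Implicit Arguments. Unset Strict Implicit. Unset Printing Implicit Defensive.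
Import Order.TTheory GRing.Theory Num.Theory.
Local Open Scope ring_scope.

Section Defs.
Variable R : realType.
Variable r : R.

(* The defining test for delta_k, given s = \sum_{i=1}^{k-1} 2 i delta_i. *)
Definition delta_test (s k : nat) : bool :=
  ((s + 2 * k)%:R / (k * k.+1)%:R <= r).

Fixpoint psum (k : nat) : nat :=
  match k with
  | 0 => 0
  | k'.+1 => (psum k' + (if delta_test (psum k') k'.+1 then 2 * k'.+1 else 0))%N
  end.

(* delta_k for k >= 1 (as a boolean: true = 1, false = 0). *)
Definition delta (k : nat) : bool := delta_test (psum k.-1) k.

Lemma psum_sum k : psum k = (\sum_(1 <= i < k.+1) 2 * i * delta i)%N.
Proof.
elim: k => [|k IH]; first by rewrite big_geq.
rewrite big_nat_recr //= -IH /delta /=.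
by case: (delta_test _ _); rewrite ?muln1 ?muln0.
Qed.

Lemma delta_spec k : (1 <= k)%N ->
  delta k = ((\sum_(1 <= i < k) 2 * i * delta i + 2 * k)%N%:R
               / (k * (k + 1))%N%:R <= r).
Proof.
case: k => // k _; rewrite /delta /delta_test /= psum_sum addn1 //.
Qed.

Definition wblock (k : nat) : seq nat := nseq (2 * k) (1 - delta k)%N.

Definition wcat (K : nat) : seq nat := flatten [seq wblock k | k <- iota 1 K].

(* The length-n prefix w^(n) of the infinite word w = w^<1> w^<2> ...;
   wcat n has length n(n+1) >= n, so this is a genuine prefix of w. *)
Definition wprefix (n : nat) : seq nat := take n (wcat n).

Definition Zcard (u : seq nat) : nat := count (fun a => a == 0%N) u.

End Defs.

(* The running sum [psum k] is a greedy approximation of the target [r k(k+1)] by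
   steps [2k]: it always lies in [[r k(k+1) - 2k, r k(k+1)]].  The prefix of length
   [n], with [k(k+1) <= n <= (k+1)(k+2)], consists of the blocks [1..k], contributing
   [psum k] zeros, followed by a run of [n - k(k+1) <= 2(k+1)] equal letters.  Hence
   the zero count is within [4(k+1)] of [r n], and dividing by [n >= k(k+1)] the
   frequency is within [4/k] of [r]. *)
From mathcomp Require Import all_boot all_order all_algebra.
From mathcomp Require Import all_classical all_reals all_analysis.
From mathcomp Require Import ring lra.
Import Order.TTheory GRing.Theory Num.Theory.
Import numFieldNormedType.Exports.
Local Open Scope ring_scope.
Local Open Scope classical_set_scope.

(* The greedy rule defining [delta]: the lag of the running sum behind the target
   stays below the current step. *)
Lemma greedy_step (R : realDomainType) (t t' a b p : R) :
  t - a <= p <= t -> t <= t' <= t + b -> a <= b ->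
  t' - b <= (if p + b <= t' then p + b else p) <= t'.
Proof. by move=> /andP[? ?] /andP[? ?] ?; case: ifPn; rewrite -?ltNge => ?; lra. Qed.

Lemma mulSS_nat k : (k.+1 * k.+2 = k * k.+1 + 2 * k.+1)%N.
Proof. by rewrite mulnC !mulSn addnA addnn -mul2n addnC. Qed.

Lemma block_index k0 n : (k0 * k0.+1 <= n)%N ->
  exists k, [/\ (k0 <= k)%N, (k * k.+1 <= n)%N & (n <= k.+1 * k.+2)%N].
Proof.
elim: n => [|n IH].
  by rewrite leqn0 muln_eq0 orbF => /eqP ->; exists 0%N.
rewrite leq_eqVlt => /orP[/eqP <-|].
  by exists k0; split => //; apply: leq_mul.
rewrite ltnS => /IH[k [k0k lekn lenk]].
have [lenk'|ltkn] := leqP n.+1 (k.+1 * k.+2).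
  by exists k; split => //; apply: ltnW.
exists k.+1; split; [exact: leqW | exact: ltnW |].
by apply: (leq_ltn_trans lenk); rewrite ltn_mul.
Qed.

Section ZeroFrequency.
Context {R : realType} (r : R).
Hypotheses (r_ge0 : 0 <= r) (r_lt1 : r < 1).

Lemma delta_testE s k : (0 < k)%N ->
  delta_test r s k = ((s + 2 * k)%:R <= r * (k * k.+1)%:R).
Proof. by move=> k_gt0; rewrite /delta_test ler_pdivrMr // ltr0n muln_gt0 k_gt0. Qed.

Lemma psum_bounds k :
  r * (k * k.+1)%:R - (2 * k)%:R <= (psum r k)%:R <= r * (k * k.+1)%:R.
Proof.
elim: k => [|k IH]; first by rewrite /= mul0n mulr0 subrr lexx.
have -> : (psum r k.+1)%:R = if (psum r k)%:R + (2 * k.+1)%:R <= r * (k.+1 * k.+2)%:R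
    then (psum r k)%:R + (2 * k.+1)%:R else (psum r k)%:R :> R.
  by rewrite /= delta_testE // -natrD; case: ifP; rewrite ?addn0.
apply: greedy_step IH _ _; last by rewrite ler_nat leq_mul2l leqnSn orbT.
have -> : (k.+1 * k.+2)%:R = (k * k.+1)%:R + (2 * k.+1)%:R :> R.
  by rewrite -natrD mulSS_nat.
rewrite mulrDr lerDl lerD2l mulr_ge0 //= ler_piMl //; exact: ltW.
Qed.

Lemma wcatS K : wcat r K.+1 = wcat r K ++ wblock r K.+1.
Proof. by rewrite /wcat -[K.+1]addn1 iotaD map_cat flatten_cat /= cats0 add1n addn1. Qed.

Lemma size_wcat K : size (wcat r K) = (K * K.+1)%N.
Proof. by elim: K => // K IH; rewrite wcatS size_cat IH size_nseq mulSS_nat. Qed.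

Lemma Zcard_wcat K : Zcard (wcat r K) = psum r K.
Proof.
elim: K => // K IH; rewrite wcatS /Zcard count_cat -/(Zcard _) IH count_nseq.
by rewrite /delta /=; case: delta_test; rewrite ?mul1n ?mul0n.
Qed.

Lemma wcat_prefix K L : (K <= L)%N -> exists s, wcat r L = wcat r K ++ s.
Proof.
elim: L => [|L IH]; first by rewrite leqn0 => /eqP ->; exists [::]; rewrite cats0.
rewrite leq_eqVlt => /orP[/eqP ->|]; first by exists [::]; rewrite cats0.
by rewrite ltnS => /IH[s E]; exists (s ++ wblock r L.+1); rewrite wcatS E catA.
Qed.

Lemma take_wcat n K L : (n <= K * K.+1)%N -> (n <= L * L.+1)%N ->
  take n (wcat r L) = take n (wcat r K).
Proof.
wlog leKL : K L / (K <= L)%N.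
  by move=> W lenK lenL; have [/W|/ltnW/W ->] := leqP K L; first exact.
move=> lenK _; have [s ->] := @wcat_prefix K L leKL.
rewrite take_cat size_wcat ltn_neqAle lenK andbT.
by case: eqP => // ->; rewrite subnn take0 cats0 -size_wcat take_size.
Qed.

Lemma Zcard_wprefix n k : (k * k.+1 <= n)%N -> (n <= k.+1 * k.+2)%N ->
  Zcard (wprefix r n) = (psum r k + delta r k.+1 * (n - k * k.+1))%N.
Proof.
move=> lekn lenk; rewrite /wprefix (@take_wcat n k.+1 n) // ?leq_pmulr //.
rewrite wcatS take_cat size_wcat ltnNge lekn /= /Zcard count_cat -/(Zcard _).
rewrite Zcard_wcat take_nseq ?count_nseq; last by rewrite leq_subLR -mulSS_nat.
by case: (delta r k.+1).
Qed.

End ZeroFrequency.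

Lemma frequency_error (R : realFieldType) (r p m K Z : R) : 0 <= r <= 1 ->
  0 < K -> 0 <= m <= 2 * (K + 1) -> r * (K * (K + 1)) - 2 * K <= p <= r * (K * (K + 1)) ->
  Z = p \/ Z = p + m -> `|r - Z / (K * (K + 1) + m)| <= 4 / K.
Proof.
move=> /andP[r_ge0 r_le1] K_gt0 /andP[m_ge0 m_le] /andP[p_ge p_le] hZ.
have rK : r * K <= K by rewrite ler_piMl // ltW.
have rm : r * m <= m by rewrite ler_piMl.
have rm0 : 0 <= r * m by rewrite mulr_ge0.
have n_gt0 : 0 < K * (K + 1) + m by rewrite ltr_wpDr // mulr_gt0 //; lra.
have -> : r - Z / (K * (K + 1) + m) = (r * (K * (K + 1) + m) - Z) / (K * (K + 1) + m).
  by field; rewrite gt_eqF.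
rewrite normrM normfV (gtr0_norm n_gt0) ler_pdivrMr //.
have -> : 4 / K * (K * (K + 1) + m) = 4 * (K + 1) + 4 / K * m by field; rewrite gt_eqF.
have : 0 <= 4 / K * m by rewrite mulr_ge0 // divr_ge0 // ltW.
have : `|r * (K * (K + 1) + m) - Z| <= 4 * (K + 1).
  by rewrite ler_norml; case: hZ => ->; apply/andP; split; lra.
lra.
Qed.

Theorem lemma4p16 (R : realType) (r : R) (hr0 : 0 <= r) (hr1 : r < 1) :
  (fun n : nat => (Zcard (wprefix r n))%:R / n%:R : R) @ \oo --> r.
Proof.
apply/cvgrPdist_le => eps eps_gt0.
set k0 := (Num.truncn (4 / eps)).+1.
exists (k0 * k0.+1)%N => // n /= len.
have [k [k0k lekn lenk]] := @block_index _ _ len.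
have k_gt0 : (0 < k)%N by apply: leq_trans k0k.
have bound_le_eps : 4 / k%:R <= eps.
  rewrite ler_pdivrMr ?ltr0n // mulrC -ler_pdivrMr //.
  by apply/ltW/(lt_le_trans (truncnS_gt _)); rewrite ler_nat.
apply: le_trans bound_le_eps.
rewrite (Zcard_wprefix r n k lekn lenk); set m := (n - k * k.+1)%N.
have -> : n%:R = k%:R * (k%:R + 1) + m%:R :> R.
  by rewrite natr1 -natrM -natrD subnKC.
have := psum_bounds r hr0 hr1 k; rewrite !natrM -natr1 => psum_k.
apply: (@frequency_error _ r (psum r k)%:R) => //.
- by rewrite hr0 ltW.
- by rewrite ltr0n.
- by rewrite ler0n /= natr1 -natrM ler_nat leq_subLR -mulSS_nat.
- by case: (delta r k.+1); rewrite ?mul1n ?mul0n ?addn0 ?natrD; [right | left].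
Qed.
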